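(* Let $n\geq 4$ and let $S$ be any meet-semilattice of order $n$ having a greatest element. Then \[ \sum_{s\in S}|\mathrm{cov}_1(s)|\leq\sum_{s\in F_n}|\mathrm{cov}_1(s)|, \] where $F_n=\{0,a_1,\ldots,a_{n-2},1\}$ is the meet-semilattice of order $n$ with least element $0$, greatest element $1$, and $a_1,\ldots,a_{n-2}$ pairwise incomparable.
   Context: The meet is written as multiplication. For a semilattice $S$ and $s\in S$, $\mathrm{cov}_1(s)$ denotes the set of equations $xa=xa'$ ($a,a'\in S$; formally ordered pairs $(a,a')$) satisfied by $s$, i.e. with $sa=sa'$; thus $|\mathrm{cov}_1(s)|=|\{(a,a')\in S\times S\mid sa=sa'\}|$. *)

From mathcomp Require Import all_boot.
Set Implicit Arguments. Unset Strict Implicit. Unset Printing Implicit Defensive.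

Definition is_meet_semilattice (T : Type) (m : T -> T -> T) : Prop :=
  (forall x y z, m x (m y z) = m (m x y) z) /\
  (forall x y, m x y = m y x) /\
  (forall x, m x x = x).

Definition has_greatest (T : Type) (m : T -> T -> T) : Prop :=
  exists t : T, forall x, m t x = x.

Definition cov1_card (T : finType) (m : T -> T -> T) (s : T) : nat :=
  #|[set p : T * T | m s p.1 == m s p.2]|.

(* F_n on 'I_n: 0 is the least element, n-1 the greatest element,
   1, ..., n-2 are the pairwise incomparable atoms a_1..a_{n-2}. *)
Definition Fn_meet (n : nat) (x y : 'I_n) : 'I_n :=
  if x == y then x
  else if val x == n.-1 then y
  else if val y == n.-1 then x
  else Ordinal (leq_ltn_trans (leq0n x) (ltn_ord x)).

From mathcomp Require Import all_boot zify.
Set Implicit Arguments. Unset Strict Implicit. Unset Printing Implicit Defensive.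

(* Fix s and let d, u, w count the elements below s, strictly above s and
   incomparable to s.  If s a = s a', then either a = a' <= s, or one of a, a'
   lies below s and equals the meet of s with the other, or both lie strictly
   above s, or both are incomparable to s; hence
   |cov_1(s)| <= d + 2 (u + w) + u^2 + w^2.
   Counting the comparable pairs in two ways gives sum_s d = sum_s (u + 1), so
   adding 2 (d - u - 1) to every term leaves the total unchanged.  After this
   correction the bound is 3n - 2 at the top, (n - 1)^2 + 1 at the bottom and
   (n - 2)^2 + 4 elsewhere, and these are exactly the corrected counts of the
   top, the bottom and the atoms of F_n. *)

Lemma sum_nat_const_but2 (T : finType) (t b : T) (F : T -> nat) (c : nat) :
  t != b -> (forall s, s != t -> s != b -> F s = c) ->
  \sum_s F s = F t + F b + (#|T| - 2) * c.
Proof.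
move=> tb Fc; have bt : b != t by rewrite eq_sym.
rewrite (bigD1 t) //= (bigD1 b) /= ?bt // addnA.
rewrite (eq_bigr (fun _ => c)) => [|s /andP[]]; last exact: Fc.
rewrite sum_nat_const; congr (_ + _ * _).
rewrite [#|T|](cardD1 t) [#|[predD1 T & t]|](cardD1 b) !inE bt addnA addKn.
by apply: eq_card => s; rewrite !inE andbT andbC.
Qed.

Lemma cov1_card_neutral (T : finType) (m : T -> T -> T) s :
  (forall x, m s x = x) -> cov1_card m s = #|T|.
Proof.
move=> ms; rewrite /cov1_card (_ : [set p | _] = [set (a, a) | a : T]).
  by rewrite card_imset // => x y [].
apply/setP => -[a b]; rewrite inE /= !ms.
by apply/eqP/imsetP => [-> | [x _ [-> ->]]] //; exists b.
Qed.

Lemma cov1_card_absorbing (T : finType) (m : T -> T -> T) s :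
  (forall x, m s x = s) -> cov1_card m s = #|T| ^ 2.
Proof.
move=> ms; rewrite /cov1_card (_ : [set p | _] = setT) ?cardsT ?card_prod ?mulnn //.
by apply/setP => -[a b]; rewrite !inE /= !ms eqxx.
Qed.

Lemma card_same_side (T : finType) (A : {set T}) :
  #|[set p : T * T | (p.1 \in A) == (p.2 \in A)]| = #|A| ^ 2 + #|~: A| ^ 2.
Proof.
rewrite -!mulnn -!cardsX (_ : [set p | _] = setX A A :|: setX (~: A) (~: A)).
  rewrite cardsU (_ : _ :&: _ = set0) ?cards0 ?subn0 //.
  by apply/setP => -[a b]; rewrite !inE /=; case: (a \in A); rewrite ?andbF.
by apply/setP => -[a b]; rewrite !inE /=; case: (a \in A); case: (b \in A).
Qed.

Section Semilattice.
Variables (T : finType) (m : T -> T -> T).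
Hypothesis meet_sl : is_meet_semilattice m.

Lemma meetA x y z : m x (m y z) = m (m x y) z. Proof. by case: meet_sl. Qed.
Lemma meetC x y : m x y = m y x. Proof. by case: meet_sl => _ []. Qed.
Lemma meetxx x : m x x = x. Proof. by case: meet_sl => _ []. Qed.

Lemma exists_bottom (x0 : T) : exists b, forall a, m b a = b.
Proof.
suff foldr_below (s : seq T) a : a \in s -> m (foldr m x0 s) a = foldr m x0 s.
  by exists (foldr m x0 (enum T)) => a; rewrite foldr_below ?mem_enum.
elim: s => [|x s IHs] //=; rewrite inE => /orP[/eqP ->|/IHs {2}<-].
  by rewrite meetC meetA meetxx.
by rewrite meetA.
Qed.

Definition downset s := [set a | m s a == a].
Definition upset s := [set a | m s a == s].
Definition incomparables s := ~: (downset s :|: upset s).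

Lemma card_downsetC s : #|~: downset s| = #|upset s :\ s| + #|incomparables s|.
Proof.
rewrite -(cardsID (upset s)) /incomparables setCU setDE.
congr (_ + _); apply: eq_card => a; rewrite !inE andbC.
by case: (m s a =P s) => [->|]; rewrite ?andbF // andbT eq_sym.
Qed.

Lemma cov1_sub_cover s :
  [set p : T * T | m s p.1 == m s p.2] \subset
    [set (a, a) | a in downset s]
    :|: [set (m s a, a) | a in ~: downset s]
    :|: [set (a, m s a) | a in ~: downset s]
    :|: setX (upset s :\ s) (upset s :\ s)
    :|: setX (incomparables s) (incomparables s).
Proof.
have fixD x : x \in downset s -> m s x = x by rewrite inE => /eqP.
apply/subsetP => -[a b]; rewrite inE /= => /eqP e; rewrite !in_setU.
have [Da|Da] := boolP (a \in downset s); have [Db|Db] := boolP (b \in downset s).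
- suff -> : (a, b) \in [set (x, x) | x in downset s] by [].
  by apply/imsetP; exists b; rewrite // -(fixD a Da) e fixD.
- suff -> : (a, b) \in [set (m s x, x) | x in ~: downset s] by rewrite orbT.
  by apply/imsetP; exists b; rewrite ?in_setC // -e fixD.
- suff -> : (a, b) \in [set (x, m s x) | x in ~: downset s] by rewrite orbT.
  by apply/imsetP; exists a; rewrite ?in_setC // e fixD.
have sD : s \in downset s by rewrite inE meetxx.
have [sa|nsa] := eqVneq (m s a) s.
- suff -> : (a, b) \in setX (upset s :\ s) (upset s :\ s) by rewrite orbT.
  rewrite !inE /= -e sa eqxx !andbT.
  by apply/andP; split; [apply: contraNneq Da | apply: contraNneq Db] => ->.
have nsb : m s b != s by rewrite -e.
suff -> : (a, b) \in setX (incomparables s) (incomparables s) by rewrite orbT.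
rewrite !inE in Da Db *.
by rewrite /= (negbTE nsa) (negbTE nsb) !orbF Da Db.
Qed.

Lemma cov1_card_le s :
  cov1_card m s <= #|downset s| + #|~: downset s| + #|~: downset s|
                   + #|upset s :\ s| ^ 2 + #|incomparables s| ^ 2.
Proof.
have cardU (A B : {set T * T}) : #|A :|: B| <= #|A| + #|B| := (leq_card_setU A B).1.
apply: leq_trans (subset_leq_card (cov1_sub_cover s)) _; rewrite -!mulnn.
apply: leq_trans (cardU _ _) _; rewrite cardsX leq_add2r.
apply: leq_trans (cardU _ _) _; rewrite cardsX leq_add2r.
apply: leq_trans (cardU _ _) _; apply: leq_add; last exact: leq_imset_card.
by apply: leq_trans (cardU _ _) _; apply: leq_add; apply: leq_imset_card.
Qed.

Lemma sum_card_downset : \sum_s #|downset s| = \sum_s #|upset s|.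
Proof.
have card_sum (A : {set T}) : #|A| = \sum_a (a \in A).
  by rewrite -sum1_card big_mkcond; apply: eq_bigr => a _; case: (a \in A).
rewrite (eq_bigr _ (fun s _ => card_sum (downset s))) exchange_big.
apply: eq_bigr => a _; rewrite card_sum; apply: eq_bigr => s _.
by rewrite !inE meetC.
Qed.

Section TopBottom.
Variables t b : T.
Hypotheses (meet_top : forall x, m t x = x) (meet_bottom : forall x, m b x = b).
Hypothesis card_gt1 : 1 < #|T|.

Lemma top_neq_bottom : t != b.
Proof.
move: card_gt1; apply: contraTneq => tb; rewrite -leqNgt -(cards1 b).
by apply/subset_leq_card/subsetP => x _; rewrite inE -[x]meet_top tb meet_bottom.
Qed.

(* The corrected count |cov_1| + 2 (d - u - 1) of the matching element of F_n. *)
Definition extremal_weight s :=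
  if s == t then 3 * #|T| - 2
  else if s == b then (#|T| - 1) ^ 2 + 1
  else (#|T| - 2) ^ 2 + 4.

Lemma weighted_cov1_le s :
  cov1_card m s + 2 * #|downset s| <= extremal_weight s + 2 * #|upset s|.
Proof.
have card_gt0 : 0 < #|T| := ltnW card_gt1.
rewrite /extremal_weight; case: eqVneq => [-> | st].
  have Dt : downset t = setT by apply/setP => x; rewrite !inE meet_top eqxx.
  have Ut : upset t = [set t] by apply/setP => x; rewrite !inE meet_top.
  by rewrite cov1_card_neutral // Dt Ut cardsT cards1; lia.
case: eqVneq => [-> | sb].
  have Db : downset b = [set b] by apply/setP => x; rewrite !inE meet_bottom eq_sym.
  have Ub : upset b = setT by apply/setP => x; rewrite !inE meet_bottom eqxx.
  by rewrite cov1_card_absorbing // Db Ub cards1 cardsT; nia.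
have Us : 1 <= #|upset s :\ s|.
  by apply/card_gt0P; exists t; rewrite !inE meetC meet_top eq_sym st eqxx.
have Ds : 2 <= #|downset s|.
  have <- : #|[set s; b]| = 2 by rewrite cards2 sb.
  apply/subset_leq_card/subsetP => x.
  by rewrite !inE => /orP[] /eqP ->; rewrite ?meetxx // meetC meet_bottom.
have cardU : #|upset s| = #|upset s :\ s| + 1.
  by rewrite (cardsD1 s) inE meetxx eqxx addnC.
have cov1_le := cov1_card_le s; rewrite card_downsetC in cov1_le.
have := cardsC (downset s); rewrite card_downsetC cardU => <-.
move: Us Ds cov1_le; case: #|downset s| => [|[|d]] //.
case: #|upset s :\ s| => [|u] // _ _.
have : d <= d * d by case: d => // d; rewrite mulSn leq_addr.
nia.
Qed.

Lemma sum_cov1_le :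
  \sum_s cov1_card m s
    <= 3 * #|T| - 2 + ((#|T| - 1) ^ 2 + 1) + (#|T| - 2) * ((#|T| - 2) ^ 2 + 4).
Proof.
have <- : \sum_s extremal_weight s
  = 3 * #|T| - 2 + ((#|T| - 1) ^ 2 + 1) + (#|T| - 2) * ((#|T| - 2) ^ 2 + 4).
  rewrite (sum_nat_const_but2 (c := (#|T| - 2) ^ 2 + 4) top_neq_bottom).
    by rewrite /extremal_weight eqxx eq_sym (negbTE top_neq_bottom) eqxx.
  by move=> s st sb; rewrite /extremal_weight (negbTE st) (negbTE sb).
rewrite -(leq_add2r (2 * \sum_s #|downset s|)) {2}sum_card_downset.
rewrite !big_distrr -!big_split /=.
by apply: leq_sum => s _; apply: weighted_cov1_le.
Qed.

End TopBottom.

End Semilattice.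

Lemma val_Fn_meet n (x y : 'I_n) :
  val (Fn_meet x y) =
    if x == y then val x else if val x == n.-1 then val y
    else if val y == n.-1 then val x else 0.
Proof. by rewrite /Fn_meet; do 3 case: ifP => //. Qed.

Section Fn.
Variable n : nat.
Hypothesis n_gt1 : 1 < n.

Fact Fn_top_subproof : n.-1 < n. Proof. by rewrite ltn_predL (ltnW n_gt1). Qed.
Definition Fn_top : 'I_n := Ordinal Fn_top_subproof.
Definition Fn_bot : 'I_n := Ordinal (ltnW n_gt1).

Lemma Fn_top_neq_bot : Fn_top != Fn_bot.
Proof. by apply/eqP => /(congr1 val) /=; lia. Qed.

Lemma Fn_meet_top x : Fn_meet Fn_top x = x.
Proof. by apply: val_inj; rewrite val_Fn_meet /= eqxx; case: eqP => [<-|]. Qed.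

Lemma Fn_meet_bot x : Fn_meet Fn_bot x = Fn_bot.
Proof.
apply: val_inj; rewrite val_Fn_meet /= (_ : (0 == n.-1) = false); last by lia.
by rewrite !if_same.
Qed.

Lemma Fn_meet_atom (s x : 'I_n) : s != Fn_top -> s != Fn_bot ->
  Fn_meet s x = if x \in [set s; Fn_top] then s else Fn_bot.
Proof.
move=> st sb; apply: val_inj; rewrite val_Fn_meet !inE eq_sym.
rewrite -[val s == _]/(s == Fn_top) -[val x == _]/(x == Fn_top) (negbTE st).
by case: (x == s) => //=; case: (x == Fn_top).
Qed.

Lemma cov1_Fn_atom (s : 'I_n) : s != Fn_top -> s != Fn_bot ->
  cov1_card (@Fn_meet n) s = (n - 2) ^ 2 + 4.
Proof.
move=> st sb; set A := [set s; Fn_top].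
have cardA : #|A| = 2 by rewrite cards2 st.
have cardAC : #|~: A| = n - 2 by have := cardsC A; rewrite cardA card_ord; lia.
have meet_s x : Fn_meet s x = if x \in A then s else Fn_bot by exact: Fn_meet_atom.
clearbody A; rewrite /cov1_card (_ : [set p | _] = [set p | (p.1 \in A) == (p.2 \in A)]).
  by rewrite card_same_side cardA cardAC addnC.
apply/setP => -[a b]; rewrite !inE /= !meet_s.
by case: (a \in A); case: (b \in A); rewrite ?eqxx // ?(eq_sym Fn_bot) (negbTE sb).
Qed.

Lemma sum_cov1_Fn :
  \sum_s cov1_card (@Fn_meet n) s = n + n ^ 2 + (n - 2) * ((n - 2) ^ 2 + 4).
Proof.
rewrite (sum_nat_const_but2 (c := (n - 2) ^ 2 + 4) Fn_top_neq_bot) => [|s st sb].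
  by rewrite (cov1_card_neutral Fn_meet_top) (cov1_card_absorbing Fn_meet_bot) card_ord.
exact: cov1_Fn_atom.
Qed.

End Fn.

Theorem theorem3 (n : nat) (T : finType) (m : T -> T -> T) :
  4 <= n -> #|T| = n -> is_meet_semilattice m -> has_greatest m ->
  \sum_(s : T) cov1_card m s <= \sum_(s : 'I_n) cov1_card (@Fn_meet n) s.
Proof.
move=> n_ge4 card_T meet_sl [t meet_top].
have [b meet_bottom] := exists_bottom meet_sl t.
have n_gt1 : 1 < n by apply: leq_trans n_ge4.
have := sum_cov1_le meet_sl meet_top meet_bottom.
rewrite card_T => /(_ n_gt1) sum_le.
rewrite sum_cov1_Fn //; apply: leq_trans sum_le _.
by rewrite leq_add2r; nia.
Qed.
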